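(* Let $m\ge n\ge p\ge 1$, let $A$ be an $m\times n$ real matrix and $N=\operatorname{diag}(\mu_1,\dots,\mu_p)$ with $\mu_1>\dots>\mu_p>0$. On $M=\mathrm{St}(p,m)\times\mathrm{St}(p,n)$ with metric $\langle(\xi_1,\eta_1),(\xi_2,\eta_2)\rangle_{(U,V)}=\operatorname{tr}(\xi_1^T\xi_2)+\operatorname{tr}(\eta_1^T\eta_2)$ and retraction $R_{(U,V)}(\xi,\eta)=(\mathrm{qf}(U+\xi),\mathrm{qf}(V+\eta))$, let $F(U,V)=\operatorname{tr}(U^TAVN)$. Then there exists $L>0$ such that \[ \bigl|\mathrm{D}(F\circ R_{(U,V)})(t\zeta)[\zeta]-\mathrm{D}(F\circ R_{(U,V)})(0)[\zeta]\bigr|\le Lt \] for all $(U,V)\in M$, $\zeta=(\xi,\eta)\in T_{(U,V)}M$ with $\|\zeta\|_{(U,V)}=1$, and $t\ge 0$.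
   Context: $\mathrm{St}(p,n)=\{X\in\mathbb{R}^{n\times p}: X^TX=I_p\}$; for a full-rank $B$, $\mathrm{qf}(B)$ denotes the $Q$-factor of the unique decomposition $B=QR'$ with $Q$ having orthonormal columns and $R'$ upper triangular with positive diagonal. *)

(* real analysis (derivatives) on Stdlib R.
   Matrices are represented as functions nat -> nat -> R; only the entries
   in the stated index range are ever used. *)
From Stdlib Require Import Reals Lra ClassicalEpsilon.
Open Scope R_scope.

Definition Mat := nat -> nat -> R.

Fixpoint rsum (n : nat) (f : nat -> R) : R :=
  match n with O => 0 | S k => rsum k f + f k end.

Definition transpose (A : Mat) : Mat := fun i j => A j i.
Definition mmul (k : nat) (A B : Mat) : Mat :=
  fun i j => rsum k (fun l => A i l * B l j).
Definition madd (A B : Mat) : Mat := fun i j => A i j + B i j.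
Definition mscale (c : R) (A : Mat) : Mat := fun i j => c * A i j.
Definition mtrace (k : nat) (A : Mat) : R := rsum k (fun i => A i i).
Definition diagm (mu : nat -> R) : Mat :=
  fun i j => if Nat.eqb i j then mu i else 0.

(* X is an (m x p) matrix with X^T X = I_p, i.e. X in St(p,m) *)
Definition Stiefel (m p : nat) (X : Mat) : Prop :=
  forall i j, (i < p)%nat -> (j < p)%nat ->
    mmul m (transpose X) X i j = if Nat.eqb i j then 1 else 0.

Definition tangentSt (m p : nat) (U xi : Mat) : Prop :=
  forall i j, (i < p)%nat -> (j < p)%nat ->
    mmul m (transpose U) xi i j + mmul m (transpose xi) U i j = 0.

Definition is_qr (m p : nat) (B Q Rr : Mat) : Prop :=
  Stiefel m p Q /\
  (forall i j, (j < i)%nat -> (i < p)%nat -> Rr i j = 0) /\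
  (forall i, (i < p)%nat -> 0 < Rr i i) /\
  (forall i j, (i < m)%nat -> (j < p)%nat -> B i j = mmul p Q Rr i j).

(* qf(B): the Q-factor of the (unique, for full-rank B) QR decomposition *)
Definition qf (m p : nat) (B : Mat) : Mat :=
  epsilon (inhabits (fun _ _ => 0)) (fun Q => exists Rr, is_qr m p B Q Rr).

Definition Fcost (m n p : nat) (A : Mat) (mu : nat -> R) (U V : Mat) : R :=
  mtrace p (mmul p (mmul n (mmul m (transpose U) A) V) (diagm mu)).

Definition pullback (m n p : nat) (A : Mat) (mu : nat -> R) (U V xi eta : Mat)
  (tau : R) : R :=
  Fcost m n p A mu (qf m p (madd U (mscale tau xi)))
                   (qf n p (madd V (mscale tau eta))).

Definition tnorm2 (m n p : nat) (xi eta : Mat) : R :=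
  mtrace p (mmul m (transpose xi) xi) + mtrace p (mmul n (transpose eta) eta).

(* Write (xi,eta) for a unit tangent vector at (U,V) and phi(t) for the
   pullback F(qf(U + t xi), qf(V + t eta)).  The claim is |phi'(t) - phi'(0)|
   <= L t, which by the mean value theorem follows from a bound on phi'' that
   is uniform in U, V, xi, eta and t.  U + t xi never shrinks vectors since U^T xi is
     skew-symmetric.
   - Calculus: functions that are twice differentiable with bounded value and
     first two derivatives ("bounded C2" functions) are closed under sums and
     products.
   - Along t |-> U + t xi, the Q-factor is C2 (from the normalization
     formulas), and differentiating Q R = U + t xi and Q^T Q = I once and twice
     gives linear systems whose solution (an upper triangular part plus a
     skew-symmetric part) yields entrywise bounds on Q' and Q'' that depend
     only on m and p.
   - phi is a finite sum of products of such entries, hence has a uniformly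
     bounded second derivative, and the theorem follows.
   The constant L depends only on m, n, p, A and mu. *)

From Stdlib Require Import Reals Lra Lia Wf_nat ClassicalEpsilon.
From Coquelicot Require Import Coquelicot.
Open Scope R_scope.

Lemma rsum_ext n f g : (forall k, (k < n)%nat -> f k = g k) -> rsum n f = rsum n g.
Proof. induction n; simpl; intros H; auto. rewrite IHn, H; auto. Qed.

Lemma rsum_plus n f g : rsum n (fun k => f k + g k) = rsum n f + rsum n g.
Proof. induction n; simpl; [lra|]. rewrite IHn; lra. Qed.

Lemma rsum_minus n f g : rsum n (fun k => f k - g k) = rsum n f - rsum n g.
Proof. induction n; simpl; [lra|]. rewrite IHn; lra. Qed.

Lemma rsum_scal_l n c f : rsum n (fun k => c * f k) = c * rsum n f.
Proof. induction n; simpl; [lra|]. rewrite IHn; lra. Qed.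

Lemma rsum_scal_r n c f : rsum n (fun k => f k * c) = rsum n f * c.
Proof. induction n; simpl; [lra|]. rewrite IHn; lra. Qed.

Lemma rsum_zero n f : (forall k, (k < n)%nat -> f k = 0) -> rsum n f = 0.
Proof. induction n; simpl; intros H; auto. rewrite IHn, H; auto; lra. Qed.

Lemma rsum_swap n m (f : nat -> nat -> R) :
  rsum n (fun i => rsum m (fun j => f i j)) = rsum m (fun j => rsum n (fun i => f i j)).
Proof.
  induction n; simpl.
  - symmetry; apply rsum_zero; auto.
  - rewrite IHn, <- rsum_plus. reflexivity.
Qed.

Lemma rsum_extend n N f : (n <= N)%nat -> (forall k, (n <= k < N)%nat -> f k = 0) ->
  rsum N f = rsum n f.
Proof.
  induction N; intros HnN H.
  - assert (n = 0)%nat by lia. subst; reflexivity.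
  - destruct (Nat.eq_dec n (S N)). subst; reflexivity.
    simpl. rewrite IHN by (intros; try apply H; lia). rewrite H by lia. lra.
Qed.

Lemma rsum_le n f g : (forall k, (k < n)%nat -> f k <= g k) -> rsum n f <= rsum n g.
Proof.
  induction n; simpl; intros H; [lra|].
  pose proof (H n ltac:(lia)). specialize (IHn (fun k Hk => H k ltac:(lia))). lra.
Qed.

Lemma rsum_nonneg n f : (forall k, (k < n)%nat -> 0 <= f k) -> 0 <= rsum n f.
Proof.
  intros H. replace 0 with (rsum n (fun _ => 0)) by (apply rsum_zero; auto).
  apply rsum_le; auto.
Qed.

Lemma rsum_term_le n f j : (j < n)%nat -> (forall k, (k < n)%nat -> 0 <= f k) ->
  f j <= rsum n f.
Proof.
  induction n; intros Hj H; [lia|]. simpl.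
  destruct (Nat.eq_dec j n).
  - subst. pose proof (rsum_nonneg n f (fun k Hk => H k ltac:(lia))). lra.
  - pose proof (IHn ltac:(lia) (fun k Hk => H k ltac:(lia))). pose proof (H n ltac:(lia)). lra.
Qed.

Lemma rsum_sq_le n f j : (j < n)%nat -> f j ^ 2 <= rsum n (fun k => f k ^ 2).
Proof. intros Hj. apply (rsum_term_le n (fun k => f k ^ 2)); auto. intros; nra. Qed.

Lemma rsum_bound n f c : (forall k, (k < n)%nat -> Rabs (f k) <= c) ->
  Rabs (rsum n f) <= INR n * c.
Proof.
  induction n; intros H; simpl rsum.
  - rewrite Rabs_R0. simpl; lra.
  - rewrite S_INR. eapply Rle_trans. apply Rabs_triang.
    pose proof (IHn (fun k Hk => H k ltac:(lia))). pose proof (H n ltac:(lia)). lra.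
Qed.

Lemma rsum_prod_bound k (f g : nat -> R) a b :
  (forall l, (l < k)%nat -> Rabs (f l) <= a) -> (forall l, (l < k)%nat -> Rabs (g l) <= b) ->
  Rabs (rsum k (fun l => f l * g l)) <= INR k * (a * b).
Proof.
  intros HA HB. apply rsum_bound. intros l Hl. rewrite Rabs_mult.
  apply Rmult_le_compat; try apply Rabs_pos; auto.
Qed.

Lemma abs_le_1_of_sq a : a ^ 2 <= 1 -> Rabs a <= 1.
Proof. intros H. apply Rabs_le. nra. Qed.

Definition delta (i j : nat) : R := if Nat.eqb i j then 1 else 0.

Lemma delta_sym i j : delta i j = delta j i.
Proof. unfold delta. destruct (Nat.eqb_spec i j), (Nat.eqb_spec j i); subst; try lia; lra. Qed.

Lemma delta_diag i : delta i i = 1.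
Proof. unfold delta. rewrite Nat.eqb_refl. reflexivity. Qed.

Lemma rsum_delta_r n f j : (j < n)%nat -> rsum n (fun k => f k * delta k j) = f j.
Proof.
  induction n; intros Hj; [lia|]. simpl. unfold delta at 2.
  destruct (Nat.eqb_spec n j).
  - subst. rewrite rsum_zero. lra. intros k Hk. unfold delta.
    destruct (Nat.eqb_spec k j); [lia|lra].
  - rewrite IHn by lia. lra.
Qed.

Lemma rsum_delta_l n f j : (j < n)%nat -> rsum n (fun k => delta j k * f k) = f j.
Proof.
  intros Hj. rewrite <- (rsum_delta_r n f j Hj). apply rsum_ext; intros k _.
  rewrite delta_sym. ring.
Qed.

Lemma mmul_assoc k l (A B C : Mat) i j :
  mmul k (mmul l A B) C i j = mmul l A (mmul k B C) i j.
Proof.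
  unfold mmul.
  rewrite (rsum_ext k _ (fun a => rsum l (fun b => A i b * B b a * C a j)))
    by (intros; rewrite <- rsum_scal_r; reflexivity).
  rewrite rsum_swap. apply rsum_ext; intros b _.
  rewrite <- rsum_scal_l. apply rsum_ext; intros; ring.
Qed.

Lemma mmul_id_r k (A I : Mat) i j : (j < k)%nat ->
  (forall a, (a < k)%nat -> I a j = delta a j) -> mmul k A I i j = A i j.
Proof.
  intros Hj HI. unfold mmul. rewrite <- (rsum_delta_r k (A i) j Hj).
  apply rsum_ext; intros a Ha. rewrite HI; auto.
Qed.

Lemma mmul_id_l k (A I : Mat) i j : (i < k)%nat ->
  (forall a, (a < k)%nat -> I i a = delta i a) -> mmul k I A i j = A i j.
Proof.
  intros Hi HI. unfold mmul. rewrite <- (rsum_delta_l k (fun a => A a j) i Hi).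
  apply rsum_ext; intros a Ha. rewrite HI; auto.
Qed.

Lemma mmul_scal_l k c (A B : Mat) i j :
  mmul k (fun a b => c * A a b) B i j = c * mmul k A B i j.
Proof. unfold mmul. rewrite <- rsum_scal_l. apply rsum_ext; intros; ring. Qed.

Lemma mmul_upper k (A B : Mat) i j : (j < i)%nat ->
  (forall a, (a < i)%nat -> A i a = 0) -> (forall a, (j < a)%nat -> B a j = 0) ->
  mmul k A B i j = 0.
Proof.
  intros Hji HA HB. apply rsum_zero. intros a _.
  destruct (Nat.lt_ge_cases a i). rewrite HA by auto. ring. rewrite HB by lia. ring.
Qed.

Lemma stiefel_entry_le1 m p Q i j : Stiefel m p Q -> (i < m)%nat -> (j < p)%nat ->
  Rabs (Q i j) <= 1.
Proof.
  intros HS Hi Hj. apply abs_le_1_of_sq.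
  assert (Hnorm : rsum m (fun l => Q l j ^ 2) = 1).
  { rewrite <- (delta_diag j). unfold delta. rewrite <- (HS j j Hj Hj).
    apply rsum_ext; intros; unfold transpose; ring. }
  rewrite <- Hnorm. apply (rsum_sq_le m (fun l => Q l j)); auto.
Qed.

(* QR factorization by Gram-Schmidt. *)

(* [B] (m x p) does not shrink vectors: |c|^2 <= |B c|^2.  This is the
   quantitative full-rank condition under which QR exists and its inverse
   triangular factor is bounded. *)
Definition nonshrinking m p (B : Mat) := forall c : nat -> R,
  rsum p (fun a => c a ^ 2) <= rsum m (fun l => (rsum p (fun a => B l a * c a)) ^ 2).

Definition gs_resid m (B Q : Mat) j i :=
  B i j - rsum j (fun k => mmul m (transpose Q) B k j * Q i k).

Lemma is_qr_R m p B Q Rr : is_qr m p B Q Rr ->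
  forall k j, (k < p)%nat -> (j < p)%nat -> Rr k j = mmul m (transpose Q) B k j.
Proof.
  intros (HS & _ & _ & HB) k j Hk Hj.
  transitivity (mmul m (transpose Q) (mmul p Q Rr) k j).
  - rewrite <- mmul_assoc. symmetry. apply mmul_id_l; auto.
  - apply rsum_ext; intros l Hl. rewrite HB; auto.
Qed.

Lemma qr_column m p B Q Rr : is_qr m p B Q Rr -> forall j, (j < p)%nat ->
  0 < rsum m (fun l => gs_resid m B Q j l ^ 2) /\
  forall i, (i < m)%nat ->
    Q i j = gs_resid m B Q j i * / sqrt (rsum m (fun l => gs_resid m B Q j l ^ 2)).
Proof.
  intros Hqr j Hj. pose proof Hqr as (HS & Hup & Hd & HB).
  assert (Hw : forall i, (i < m)%nat -> gs_resid m B Q j i = Q i j * Rr j j).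
  { intros i Hi. unfold gs_resid. rewrite (HB i j Hi Hj).
    change (mmul p Q Rr i j) with (rsum p (fun k => Q i k * Rr k j)).
    rewrite (rsum_extend (S j) p) by (auto; intros k Hk; rewrite Hup by lia; ring).
    simpl. rewrite (rsum_ext j (fun k => mmul m (transpose Q) B k j * Q i k)
                            (fun k => Q i k * Rr k j)). ring.
    intros k Hk. rewrite (is_qr_R m p B Q Rr Hqr k j) by lia. ring. }
  assert (Hs : rsum m (fun l => gs_resid m B Q j l ^ 2) = Rr j j ^ 2).
  { rewrite (rsum_ext m _ (fun l => Rr j j ^ 2 * (transpose Q j l * Q l j)))
      by (intros l Hl; rewrite Hw by auto; unfold transpose; ring).
    rewrite rsum_scal_l. fold (mmul m (transpose Q) Q j j).
    rewrite (HS j j Hj Hj), Nat.eqb_refl. ring. }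
  pose proof (Hd j Hj). rewrite Hs, sqrt_pow2 by lra. split. nra.
  intros i Hi. rewrite Hw by auto. field. lra.
Qed.

Lemma qr_unique m p B Q1 R1 Q2 R2 : is_qr m p B Q1 R1 -> is_qr m p B Q2 R2 ->
  forall j, (j < p)%nat -> forall i, (i < m)%nat -> Q1 i j = Q2 i j.
Proof.
  intros H1 H2.
  enough (H : forall J j, (j < J)%nat -> (j < p)%nat -> forall i, (i < m)%nat -> Q1 i j = Q2 i j)
    by (intros j Hj; apply (H (S j)); auto).
  induction J; intros j HjJ Hj i Hi; [lia|].
  assert (Hw : forall i, (i < m)%nat -> gs_resid m B Q1 j i = gs_resid m B Q2 j i).
  { intros i' Hi'. unfold gs_resid, mmul, transpose. f_equal. apply rsum_ext; intros k Hk.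
    rewrite (IHJ k) by lia. f_equal. apply rsum_ext; intros l Hl. rewrite (IHJ k) by lia. auto. }
  rewrite (proj2 (qr_column m p B Q1 R1 H1 j Hj)), (proj2 (qr_column m p B Q2 R2 H2 j Hj)) by auto.
  rewrite Hw by auto. do 3 f_equal. apply rsum_ext; intros l Hl. rewrite Hw; auto.
Qed.

Definition gs_inv m (B : Mat) J (Q Rr C : Mat) :=
  (forall i k, (i < J)%nat -> (k < J)%nat -> mmul m (transpose Q) Q i k = delta i k) /\
  (forall i k, (k < i)%nat -> Rr i k = 0) /\ (forall k, (k < J)%nat -> 0 < Rr k k) /\
  (forall i k, (i < m)%nat -> (k < J)%nat -> B i k = mmul J Q Rr i k) /\
  (forall i k, (i < m)%nat -> (k < J)%nat -> Q i k = mmul J B C i k) /\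
  (forall a k, (k < a)%nat -> C a k = 0).

Section GramSchmidtStep.
Variables (m p J : nat) (B Q Rr C : Mat).
Hypothesis HB : nonshrinking m p B.
Hypothesis HJ : (J < p)%nat.
Hypothesis HI : gs_inv m B J Q Rr C.

Let r k := mmul m (transpose Q) B k J.
Let w := gs_resid m B Q J.

Lemma gs_resid_orth i : (i < J)%nat -> rsum m (fun l => Q l i * w l) = 0.
Proof.
  destruct HI as (I1 & _). intros Hi. unfold w, gs_resid.
  rewrite (rsum_ext m _ (fun l => Q l i * B l J - rsum J (fun k => r k * (Q l i * Q l k))))
    by (intros; rewrite Rmult_minus_distr_l, <- rsum_scal_l; f_equal;
        apply rsum_ext; intros; unfold r; ring).
  rewrite rsum_minus, rsum_swap.
  rewrite (rsum_ext J _ (fun k => r k * delta k i)).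
  - rewrite rsum_delta_r by auto. unfold r, mmul, transpose. ring.
  - intros k Hk. rewrite rsum_scal_l, delta_sym, <- (I1 i k) by auto. reflexivity.
Qed.

Let c a := delta a J - rsum J (fun k => r k * C a k).

Lemma gs_resid_comb i : (i < m)%nat -> w i = rsum p (fun a => B i a * c a).
Proof.
  destruct HI as (_ & _ & _ & _ & I5 & I6). intros Hi. unfold c, w, gs_resid. fold r.
  rewrite (rsum_ext p _ (fun a => B i a * delta a J - rsum J (fun k => r k * (B i a * C a k))))
    by (intros a Ha; rewrite Rmult_minus_distr_l; f_equal; rewrite <- rsum_scal_l;
        apply rsum_ext; intros; ring).
  rewrite rsum_minus, rsum_delta_r by auto. f_equal.
  rewrite rsum_swap. apply rsum_ext; intros k Hk. rewrite rsum_scal_l. f_equal.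
  rewrite I5 by auto. symmetry. apply rsum_extend. lia. intros a Ha. rewrite I6 by lia. ring.
Qed.

Lemma gs_comb_last : c J = 1.
Proof.
  destruct HI as (_ & _ & _ & _ & _ & I6). unfold c. rewrite delta_diag, rsum_zero. ring.
  intros k Hk. rewrite I6 by lia. ring.
Qed.

Lemma gs_comb_lower a : (J < a)%nat -> c a = 0.
Proof.
  destruct HI as (_ & _ & _ & _ & _ & I6). intros Ha. unfold c, delta.
  destruct (Nat.eqb_spec a J); [lia|]. rewrite rsum_zero. ring.
  intros k Hk. rewrite I6 by lia. ring.
Qed.

(* Since [B] does not shrink [c] and [c_J = 1], the residual has norm >= 1. *)
Lemma gs_resid_norm : 1 <= rsum m (fun l => w l ^ 2).
Proof.
  pose proof (HB c) as Hc. pose proof (rsum_sq_le p c J HJ) as Hc2. rewrite gs_comb_last in Hc2.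
  rewrite (rsum_ext m _ (fun l => (rsum p (fun a => B l a * c a)) ^ 2))
    by (intros; rewrite gs_resid_comb; auto).
  lra.
Qed.

Lemma gs_step : exists Q' Rr' C', gs_inv m B (S J) Q' Rr' C'.
Proof.
  pose proof HI as (I1 & I2 & I3 & I4 & I5 & I6).
  set (s := rsum m (fun l => w l ^ 2)).
  set (nu := sqrt s).
  assert (Hs1 : 1 <= s) by apply gs_resid_norm.
  assert (Hnu : 0 < nu) by (apply sqrt_lt_R0; lra).
  assert (Hnu2 : nu * nu = s) by (apply sqrt_sqrt; lra).
  exists (fun i k => if Nat.eqb k J then w i / nu else Q i k).
  exists (fun a k => if Nat.eqb k J
                     then (if Nat.ltb a J then r a else if Nat.eqb a J then nu else 0)
                     else Rr a k).
  exists (fun a k => if Nat.eqb k J then c a / nu else C a k).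
  unfold gs_inv, mmul, transpose.
  split; [|split; [|split; [|split; [|split]]]].
  - intros i k Hi Hk.
    destruct (Nat.eqb_spec i J), (Nat.eqb_spec k J).
    + subst. unfold delta. rewrite Nat.eqb_refl, (rsum_ext m _ (fun l => / s * w l ^ 2)).
      rewrite rsum_scal_l. fold s. field. lra.
      intros. rewrite <- Hnu2. field. lra.
    + subst. rewrite (rsum_ext m _ (fun l => / nu * (Q l k * w l))) by (intros; field; lra).
      rewrite rsum_scal_l, gs_resid_orth by lia.
      unfold delta. destruct (Nat.eqb_spec J k); [lia|ring].
    + subst. rewrite (rsum_ext m _ (fun l => / nu * (Q l i * w l))) by (intros; field; lra).
      rewrite rsum_scal_l, gs_resid_orth by lia.
      unfold delta. destruct (Nat.eqb_spec i J); [lia|ring].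
    + apply I1; lia.
  - intros i k Hki. destruct (Nat.eqb_spec k J).
    + destruct (Nat.ltb_spec i J); [lia|]. destruct (Nat.eqb_spec i J); [lia|auto].
    + apply I2; auto.
  - intros k Hk. destruct (Nat.eqb_spec k J).
    + subst. destruct (Nat.ltb_spec J J); [lia|]. auto.
    + apply I3; lia.
  - intros i k Hi Hk. simpl rsum. destruct (Nat.eqb_spec k J).
    + subst. destruct (Nat.ltb_spec J J); [lia|]. rewrite Nat.eqb_refl.
      rewrite (rsum_ext J _ (fun a => r a * Q i a)).
      * unfold w, gs_resid, r. field. lra.
      * intros a Ha. destruct (Nat.eqb_spec a J); [lia|]. destruct (Nat.ltb_spec a J); [|lia]. ring.
    + rewrite I2 by lia. rewrite Nat.eqb_refl, Rmult_0_r, Rplus_0_r.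
      rewrite I4 by (auto; lia). apply rsum_ext.
      intros a Ha. destruct (Nat.eqb_spec a J); [lia|auto].
  - intros i k Hi Hk. destruct (Nat.eqb_spec k J).
    + subst. rewrite gs_resid_comb by auto.
      rewrite (rsum_ext (S J) _ (fun a => / nu * (B i a * c a))) by (intros; field; lra).
      rewrite rsum_scal_l, (rsum_extend (S J) p). field; lra. lia.
      intros a Ha. rewrite gs_comb_lower by lia. ring.
    + simpl rsum. rewrite (I6 J k), Rmult_0_r, Rplus_0_r by lia.
      rewrite I5 by (auto; lia). apply rsum_ext; intros a Ha. auto.
  - intros a k Hk. destruct (Nat.eqb_spec k J).
    + subst. rewrite gs_comb_lower by lia. field; lra.
    + apply I6; auto.
Qed.

End GramSchmidtStep.

Lemma qr_exists m p B : nonshrinking m p B ->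
  exists Q Rr C, is_qr m p B Q Rr /\
    (forall i j, (i < m)%nat -> (j < p)%nat -> Q i j = mmul p B C i j) /\
    (forall a j, (j < a)%nat -> C a j = 0).
Proof.
  intros HB.
  assert (Hall : forall J, (J <= p)%nat -> exists Q Rr C, gs_inv m B J Q Rr C).
  { induction J; intros HJ.
    - exists (fun _ _ => 0), (fun _ _ => 0), (fun _ _ => 0).
      repeat split; intros; try lia; auto.
    - destruct (IHJ ltac:(lia)) as (Q & Rr & C & HI). eapply gs_step; eauto. }
  destruct (Hall p (le_n p)) as (Q & Rr & C & I1 & I2 & I3 & I4 & I5 & I6).
  exists Q, Rr, C. repeat split; auto.
Qed.

Lemma qf_spec m p B : nonshrinking m p B -> exists Rr, is_qr m p B (qf m p B) Rr.
Proof.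
  intros HB. unfold qf. apply epsilon_spec.
  destruct (qr_exists m p B HB) as (Q & Rr & C & H & _). exists Q, Rr; auto.
Qed.

(* [qf B = B C] with [C] upper triangular and entrywise bounded by 1: column
   [j] of [C] is mapped by [B] to a unit vector, and [B] does not shrink. *)
Lemma qf_inverse_factor m p B : nonshrinking m p B -> exists C,
    (forall i j, (i < m)%nat -> (j < p)%nat -> qf m p B i j = mmul p B C i j) /\
    (forall a j, (j < a)%nat -> C a j = 0) /\
    (forall a j, (a < p)%nat -> (j < p)%nat -> Rabs (C a j) <= 1).
Proof.
  intros HB. destruct (qr_exists m p B HB) as (Q & Rr & C & H & HQ & HC).
  destruct (qf_spec m p B HB) as (Rr' & H').
  assert (HqfC : forall i j, (i < m)%nat -> (j < p)%nat -> qf m p B i j = mmul p B C i j).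
  { intros i j Hi Hj. rewrite <- HQ by auto. eapply qr_unique; eauto. }
  exists C. split; [|split]; auto.
  intros a j Ha Hj. apply abs_le_1_of_sq.
  eapply Rle_trans. apply (rsum_sq_le p (fun a => C a j) a Ha).
  eapply Rle_trans. apply (HB (fun a => C a j)).
  destruct H' as (HS & _).
  rewrite (rsum_ext m _ (fun l => transpose (qf m p B) j l * qf m p B l j)).
  - fold (mmul m (transpose (qf m p B)) (qf m p B) j j). rewrite (HS j j Hj Hj), Nat.eqb_refl. lra.
  - intros l Hl. unfold transpose. rewrite HqfC by auto. unfold mmul. ring.
Qed.

(* The matrices on a retraction curve do not shrink vectors: for [U] with
   orthonormal columns and [X] tangent at [U], [|(U + tX) c|^2 = |c|^2 +
   t^2 |X c|^2], because the cross term [c^T U^T X c] vanishes by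
   skew-symmetry of [U^T X]. *)

Lemma quad_form m p (Y Z : Mat) (c : nat -> R) :
  rsum m (fun l => rsum p (fun a => Y l a * c a) * rsum p (fun b => Z l b * c b)) =
  rsum p (fun a => rsum p (fun b => c a * c b * mmul m (transpose Y) Z a b)).
Proof.
  unfold mmul, transpose.
  rewrite (rsum_ext m _ (fun l => rsum p (fun a => rsum p (fun b => Y l a * c a * (Z l b * c b)))))
    by (intros; rewrite <- rsum_scal_r; apply rsum_ext; intros; rewrite rsum_scal_l; auto).
  rewrite rsum_swap. apply rsum_ext; intros a Ha.
  rewrite rsum_swap. apply rsum_ext; intros b Hb.
  rewrite <- rsum_scal_l. apply rsum_ext; intros; ring.
Qed.

Lemma skew_form p (M : Mat) (c : nat -> R) :
  (forall a b, (a < p)%nat -> (b < p)%nat -> M a b + M b a = 0) ->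
  rsum p (fun a => rsum p (fun b => c a * c b * M a b)) = 0.
Proof.
  intros H. set (T := rsum p (fun a => rsum p (fun b => c a * c b * M a b))).
  enough (T + T = 0) by lra.
  unfold T at 2. rewrite rsum_swap. unfold T. rewrite <- rsum_plus.
  apply rsum_zero; intros a Ha. rewrite <- rsum_plus. apply rsum_zero; intros b Hb.
  pose proof (H a b Ha Hb). replace (M b a) with (- M a b) by lra. ring.
Qed.

Lemma retraction_curve_nonshrinking m p U X t :
  Stiefel m p U -> tangentSt m p U X -> nonshrinking m p (madd U (mscale t X)).
Proof.
  intros HS HT c. unfold madd, mscale.
  set (u := fun l => rsum p (fun a => U l a * c a)).
  set (x := fun l => rsum p (fun a => X l a * c a)).
  rewrite (rsum_ext m _ (fun l => u l * u l + 2 * t * (u l * x l) + t ^ 2 * (x l * x l))).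
  2:{ intros l Hl.
      rewrite (rsum_ext p _ (fun a => U l a * c a + t * (X l a * c a))) by (intros; ring).
      rewrite rsum_plus, rsum_scal_l. fold (u l) (x l). ring. }
  rewrite !rsum_plus, !rsum_scal_l.
  assert (Hu : rsum m (fun l => u l * u l) = rsum p (fun a => c a ^ 2)).
  { unfold u. rewrite quad_form. apply rsum_ext; intros a Ha.
    rewrite (rsum_ext p _ (fun b => (c a * c b) * delta b a))
      by (intros; rewrite (HS a), delta_sym; auto).
    rewrite rsum_delta_r by auto. ring. }
  assert (Hux : rsum m (fun l => u l * x l) = 0).
  { unfold u, x. rewrite quad_form. apply skew_form. intros a b Ha Hb.
    rewrite <- (HT a b Ha Hb). f_equal. unfold mmul, transpose. apply rsum_ext; intros; ring. }
  assert (0 <= rsum m (fun l => x l * x l)) by (apply rsum_nonneg; intros; nra).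
  rewrite Hu, Hux. nra.
Qed.

(* Differentiating [Q R = B] and
   [Q^T Q = I] along a curve gives, for [D = Q'] and [Rd = R'],
   [D R + Q Rd = G] and [Q^T D + D^T Q = S] (with [G = B'], [S = 0]);
   differentiating twice gives the same system for [D = Q''], [Rd = R''] with
   [G = -2 Q' R'] and [S = -2 Q'^T Q'].  Multiplying the first equation by
   [C = R^-1] and then by [Q^T] exhibits [Q^T G C] as the sum of the upper
   triangular matrix [Rd C] and the matrix [Q^T D] whose symmetric part is
   [S]; this determines [Rd C], and then [D = G C - Q (Rd C)]. *)

(* An upper triangular [K] is recovered from [Z = K + Psi] and the symmetric
   part [S = Psi + Psi^T]. *)
Lemma upper_part_bound p (K Psi Z S : Mat) :
  (forall i j, (j < i)%nat -> (i < p)%nat -> K i j = 0) ->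
  (forall i j, (i < p)%nat -> (j < p)%nat -> Z i j = K i j + Psi i j) ->
  (forall i j, (i < p)%nat -> (j < p)%nat -> Psi i j + Psi j i = S i j) ->
  forall i j, (i < p)%nat -> (j < p)%nat ->
    Rabs (K i j) <= Rabs (Z i j) + Rabs (Z j i) + Rabs (S i j).
Proof.
  intros HK HZ HPsi i j Hi Hj.
  pose proof (Rabs_pos (Z i j)); pose proof (Rabs_pos (Z j i)); pose proof (Rabs_pos (S i j)).
  pose proof (HZ i j Hi Hj); pose proof (HZ j i Hj Hi); pose proof (HPsi i j Hi Hj).
  destruct (Nat.lt_total i j) as [Hij|[Hij|Hij]].
  - rewrite (HK j i) in * by auto.
    replace (K i j) with (Z i j + Z j i + - S i j) by lra.
    pose proof (Rabs_triang (Z i j + Z j i) (- S i j)). rewrite Rabs_Ropp in *.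
    pose proof (Rabs_triang (Z i j) (Z j i)). lra.
  - subst j. replace (K i i) with (Z i i + - (/2 * S i i)) by lra.
    eapply Rle_trans. apply Rabs_triang.
    rewrite Rabs_Ropp, Rabs_mult, (Rabs_right (/2)) by lra. lra.
  - rewrite HK, Rabs_R0 by auto. lra.
Qed.

Lemma mmul_madd_l k (A B C : Mat) i j :
  mmul k (madd A B) C i j = mmul k A C i j + mmul k B C i j.
Proof. unfold mmul, madd. rewrite <- rsum_plus. apply rsum_ext; intros; ring. Qed.

Lemma mmul_transpose k (A B : Mat) i j :
  mmul k (transpose A) B i j = mmul k (transpose B) A j i.
Proof. unfold mmul, transpose. apply rsum_ext; intros; ring. Qed.

(* The bounds on [Rd C] and on [D] produced by the argument above, for
   [|G C| <= g] and [|S| <= s] entrywise. *)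
Definition upper_factor_bound m g s := 2 * (INR m * g) + s.
Definition qr_deriv_bound m p g s := g + INR p * upper_factor_bound m g s.

Lemma qr_deriv_estimate m p (Q R C D Rd G S : Mat) g s :
  Stiefel m p Q ->
  (forall i j, (i < m)%nat -> (j < p)%nat -> mmul p D R i j + mmul p Q Rd i j = G i j) ->
  (forall i j, (i < p)%nat -> (j < p)%nat ->
     mmul m (transpose Q) D i j + mmul m (transpose D) Q i j = S i j) ->
  (forall k j, (j < k)%nat -> (k < p)%nat -> Rd k j = 0) ->
  (forall k j, (j < k)%nat -> C k j = 0) ->
  (forall i j, (i < p)%nat -> (j < p)%nat -> mmul p R C i j = delta i j) ->
  (forall i j, (i < m)%nat -> (j < p)%nat -> Rabs (mmul p G C i j) <= g) ->
  (forall i j, (i < p)%nat -> (j < p)%nat -> Rabs (S i j) <= s) ->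
  (forall i j, (i < p)%nat -> (j < p)%nat -> Rabs (mmul p Rd C i j) <= upper_factor_bound m g s) /\
  (forall i j, (i < m)%nat -> (j < p)%nat -> Rabs (D i j) <= qr_deriv_bound m p g s).
Proof.
  intros HQ HDR HDQ HRd HC HRC HG HS.
  set (K := mmul p Rd C). set (E := mmul p G C). set (Psi := mmul m (transpose Q) D).
  assert (HQb : forall i j, (i < m)%nat -> (j < p)%nat -> Rabs (Q i j) <= 1)
    by (intros; apply (stiefel_entry_le1 m p); auto).
  assert (HE : forall i j, (i < m)%nat -> (j < p)%nat -> E i j = D i j + mmul p Q K i j).
  { intros i j Hi Hj. unfold E, K.
    transitivity (mmul p (madd (mmul p D R) (mmul p Q Rd)) C i j).
    { apply rsum_ext; intros; unfold madd; rewrite HDR; auto. }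
    rewrite mmul_madd_l, !mmul_assoc, (mmul_id_r p D); auto. }
  assert (HZ : forall i j, (i < p)%nat -> (j < p)%nat ->
            mmul m (transpose Q) E i j = K i j + Psi i j).
  { intros i j Hi Hj.
    transitivity (mmul m (transpose Q) (madd D (mmul p Q K)) i j).
    { apply rsum_ext; intros; unfold madd; rewrite HE; auto. }
    unfold mmul at 1. unfold madd.
    rewrite (rsum_ext m _ (fun l => transpose Q i l * D l j + transpose Q i l * mmul p Q K l j))
      by (intros; ring).
    rewrite rsum_plus. fold (mmul m (transpose Q) D i j) (mmul m (transpose Q) (mmul p Q K) i j).
    rewrite <- mmul_assoc, (mmul_id_l p K); auto. unfold Psi. ring. }
  assert (HPsi : forall i j, (i < p)%nat -> (j < p)%nat -> Psi i j + Psi j i = S i j).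
  { intros i j Hi Hj. rewrite <- HDQ by auto. unfold Psi.
    rewrite (mmul_transpose m Q D j i). reflexivity. }
  assert (HKup : forall i j, (j < i)%nat -> (i < p)%nat -> K i j = 0).
  { intros i j Hji Hi. apply mmul_upper; auto. }
  assert (HZb : forall i j, (i < p)%nat -> (j < p)%nat ->
                 Rabs (mmul m (transpose Q) E i j) <= INR m * g).
  { intros i j Hi Hj. rewrite <- (Rmult_1_l g). apply rsum_prod_bound; intros; auto.
    apply HQb; lia. }
  assert (HKb : forall i j, (i < p)%nat -> (j < p)%nat -> Rabs (K i j) <= upper_factor_bound m g s).
  { intros i j Hi Hj. eapply Rle_trans.
    apply (upper_part_bound p K Psi (mmul m (transpose Q) E) S); auto.
    unfold upper_factor_bound. pose proof (HZb i j Hi Hj). pose proof (HZb j i Hj Hi).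
    pose proof (HS i j Hi Hj). lra. }
  split; auto.
  intros i j Hi Hj. replace (D i j) with (E i j - mmul p Q K i j) by (rewrite HE; auto; ring).
  unfold qr_deriv_bound. eapply Rle_trans. apply Rabs_triang. rewrite Rabs_Ropp.
  apply Rplus_le_compat. apply HG; auto.
  rewrite <- (Rmult_1_l (upper_factor_bound m g s)). apply rsum_prod_bound; intros; auto.
Qed.

Definition C1 (f : R -> R) := forall x, ex_derive f x.
Definition C2 (f : R -> R) := C1 f /\ C1 (Derive f).

Lemma C1_ext f g : (forall t, f t = g t) -> C1 f -> C1 g.
Proof. intros H Hf x. eapply ex_derive_ext; eauto. Qed.

Lemma C1_const c : C1 (fun _ => c).
Proof. intros x. apply ex_derive_const. Qed.

Lemma C1_plus f g : C1 f -> C1 g -> C1 (fun t => f t + g t).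
Proof. intros Hf Hg x. apply (ex_derive_plus f g); auto. Qed.

Lemma C1_mult f g : C1 f -> C1 g -> C1 (fun t => f t * g t).
Proof. intros Hf Hg x. apply ex_derive_mult; auto. Qed.

Lemma C1_opp f : C1 f -> C1 (fun t => - f t).
Proof. intros Hf x. apply (ex_derive_opp f); auto. Qed.

Lemma C1_inv f : C1 f -> (forall x, f x <> 0) -> C1 (fun t => / f t).
Proof. intros Hf Hn x. apply ex_derive_inv; auto. Qed.

Lemma C1_sqrt f : C1 f -> (forall x, 0 < f x) -> C1 (fun t => sqrt (f t)).
Proof. intros Hf Hp x. eexists. apply is_derive_sqrt; auto. apply Derive_correct; auto. Qed.

Lemma Derive_sqrt f x : ex_derive f x -> 0 < f x ->
  Derive (fun t => sqrt (f t)) x = Derive f x / (2 * sqrt (f x)).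
Proof.
  intros Hf Hp. apply is_derive_unique. apply is_derive_sqrt; auto. apply Derive_correct; auto.
Qed.

Lemma C1_rsum n (f : nat -> R -> R) : (forall k, (k < n)%nat -> C1 (f k)) ->
  C1 (fun t => rsum n (fun k => f k t)).
Proof. induction n; intros H; simpl. apply C1_const. apply C1_plus; auto. Qed.

Lemma Derive_rsum n (f : nat -> R -> R) x : (forall k, (k < n)%nat -> C1 (f k)) ->
  Derive (fun t => rsum n (fun k => f k t)) x = rsum n (fun k => Derive (f k) x).
Proof.
  induction n; intros H; simpl.
  - apply Derive_const.
  - rewrite (Derive_plus (fun t => rsum n (fun k => f k t)) (f n)).
    + f_equal. apply IHn; auto.
    + apply C1_rsum; auto.
    + apply H; lia.
Qed.

Lemma Derive2_ext f g x : (forall t, f t = g t) -> Derive (Derive f) x = Derive (Derive g) x.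
Proof. intros H. apply Derive_ext. intros t. apply Derive_ext. auto. Qed.

Lemma Derive2_const c x : Derive (Derive (fun _ => c)) x = 0.
Proof.
  rewrite (Derive_ext (Derive (fun _ => c)) (fun _ => 0)) by (intros; apply Derive_const).
  apply Derive_const.
Qed.

Lemma Derive2_mult f g x : C2 f -> C2 g ->
  Derive (Derive (fun t => f t * g t)) x =
  Derive (Derive f) x * g x + 2 * (Derive f x * Derive g x) + f x * Derive (Derive g) x.
Proof.
  intros [F1 F2] [G1 G2].
  rewrite (Derive_ext _ (fun t => Derive f t * g t + f t * Derive g t))
    by (intros; apply Derive_mult; auto).
  rewrite (Derive_plus (fun t => Derive f t * g t) (fun t => f t * Derive g t)).
  - rewrite !Derive_mult; auto. ring.
  - apply C1_mult; auto.
  - apply C1_mult; auto.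
Qed.

Lemma C2_ext f g : (forall t, f t = g t) -> C2 f -> C2 g.
Proof.
  intros H [H1 H2]. split. eapply C1_ext; eauto.
  eapply C1_ext; [|exact H2]. intros t. apply Derive_ext. auto.
Qed.

Lemma C2_const c : C2 (fun _ => c).
Proof.
  split. apply C1_const. eapply C1_ext; [|apply (C1_const 0)]. intros; rewrite Derive_const; auto.
Qed.

Lemma C2_affine a b : C2 (fun t => a + t * b).
Proof.
  split.
  - intros x. auto_derive. auto.
  - eapply C1_ext; [|apply (C1_const b)].
    intros t. symmetry. apply is_derive_unique. auto_derive; auto. ring.
Qed.

Lemma C2_plus f g : C2 f -> C2 g -> C2 (fun t => f t + g t).
Proof.
  intros [F1 F2] [G1 G2]. split. apply C1_plus; auto.
  eapply C1_ext; [|apply (C1_plus _ _ F2 G2)]. intros t. simpl.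
  symmetry. apply (Derive_plus f g); auto.
Qed.

Lemma C2_mult f g : C2 f -> C2 g -> C2 (fun t => f t * g t).
Proof.
  intros [F1 F2] [G1 G2]. split. apply C1_mult; auto.
  eapply C1_ext.
  - intros t. symmetry. apply Derive_mult; auto.
  - apply C1_plus; apply C1_mult; auto.
Qed.

Lemma C2_minus f g : C2 f -> C2 g -> C2 (fun t => f t - g t).
Proof.
  intros Hf Hg.
  eapply C2_ext; [|apply (C2_plus _ _ Hf (C2_mult (fun _ => -1) g (C2_const _) Hg))].
  intros; simpl; ring.
Qed.

Lemma C2_rsum n (f : nat -> R -> R) : (forall k, (k < n)%nat -> C2 (f k)) ->
  C2 (fun t => rsum n (fun k => f k t)).
Proof. induction n; intros H; simpl. apply C2_const. apply C2_plus; auto. Qed.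

Lemma C2_inv_sqrt f : C2 f -> (forall x, 0 < f x) -> C2 (fun t => / sqrt (f t)).
Proof.
  intros [F1 F2] Hp.
  assert (Hs : C1 (fun t => sqrt (f t))) by (apply C1_sqrt; auto).
  assert (Hsp : forall x, 0 < sqrt (f x)) by (intros; apply sqrt_lt_R0; auto).
  assert (Hds : C1 (Derive (fun t => sqrt (f t)))).
  { eapply C1_ext.
    - intros t. symmetry. apply Derive_sqrt; auto.
    - apply C1_mult; auto. apply C1_inv.
      + apply C1_mult; auto. apply C1_const.
      + intros x; specialize (Hsp x); lra. }
  split.
  - apply C1_inv; auto. intros x; specialize (Hsp x); lra.
  - eapply C1_ext.
    + intros t. symmetry. apply Derive_inv; auto. specialize (Hsp t); lra.
    + apply C1_mult. apply C1_opp; auto. apply C1_inv.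
      * apply C1_mult; auto. apply C1_mult; auto. apply C1_const.
      * intros x. specialize (Hsp x). simpl. nra.
Qed.

Definition dmat (A : R -> Mat) (x : R) : Mat := fun i j => Derive (fun t => A t i j) x.
Definition d2mat (A : R -> Mat) (x : R) : Mat :=
  fun i j => Derive (Derive (fun t => A t i j)) x.

Lemma C1_mmul k (A B : R -> Mat) i j :
  (forall l, (l < k)%nat -> C1 (fun t => A t i l)) ->
  (forall l, (l < k)%nat -> C1 (fun t => B t l j)) ->
  C1 (fun t => mmul k (A t) (B t) i j).
Proof.
  intros HA HB. apply (C1_rsum k (fun l t => A t i l * B t l j)).
  intros l Hl. apply C1_mult; auto.
Qed.

Lemma C2_mmul k (A B : R -> Mat) i j :
  (forall l, (l < k)%nat -> C2 (fun t => A t i l)) ->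
  (forall l, (l < k)%nat -> C2 (fun t => B t l j)) ->
  C2 (fun t => mmul k (A t) (B t) i j).
Proof.
  intros HA HB. apply (C2_rsum k (fun l t => A t i l * B t l j)).
  intros l Hl. apply C2_mult; auto.
Qed.

Lemma Derive_mmul k (A B : R -> Mat) i j x :
  (forall l, (l < k)%nat -> C1 (fun t => A t i l)) ->
  (forall l, (l < k)%nat -> C1 (fun t => B t l j)) ->
  Derive (fun t => mmul k (A t) (B t) i j) x =
  mmul k (dmat A x) (B x) i j + mmul k (A x) (dmat B x) i j.
Proof.
  intros HA HB. unfold mmul. rewrite <- rsum_plus.
  rewrite (Derive_rsum k (fun l t => A t i l * B t l j)).
  - apply rsum_ext; intros l Hl. apply Derive_mult; auto. apply HA; auto. apply HB; auto.
  - intros l Hl. apply C1_mult; auto.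
Qed.

Lemma Derive2_mmul k (A B : R -> Mat) i j x :
  (forall l, (l < k)%nat -> C2 (fun t => A t i l)) ->
  (forall l, (l < k)%nat -> C2 (fun t => B t l j)) ->
  Derive (Derive (fun t => mmul k (A t) (B t) i j)) x =
  mmul k (d2mat A x) (B x) i j + 2 * mmul k (dmat A x) (dmat B x) i j
  + mmul k (A x) (d2mat B x) i j.
Proof.
  intros HA HB.
  assert (HA1 : forall l, (l < k)%nat -> C1 (fun t => A t i l))
    by (intros l Hl; exact (proj1 (HA l Hl))).
  assert (HB1 : forall l, (l < k)%nat -> C1 (fun t => B t l j))
    by (intros l Hl; exact (proj1 (HB l Hl))).
  assert (HA2 : forall l, (l < k)%nat -> C1 (fun t => dmat A t i l))
    by (intros l Hl; exact (proj2 (HA l Hl))).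
  assert (HB2 : forall l, (l < k)%nat -> C1 (fun t => dmat B t l j))
    by (intros l Hl; exact (proj2 (HB l Hl))).
  rewrite (Derive_ext _ (fun t => mmul k (dmat A t) (B t) i j + mmul k (A t) (dmat B t) i j))
    by (intros; apply Derive_mmul; auto).
  rewrite Derive_plus by (apply C1_mmul; auto).
  rewrite !Derive_mmul by auto.
  change (dmat (dmat A) x) with (d2mat A x). change (dmat (dmat B) x) with (d2mat B x).
  lra.
Qed.

Definition bounded_C2 (f : R -> R) a b c :=
  C2 f /\ forall x, Rabs (f x) <= a /\ Rabs (Derive f x) <= b /\ Rabs (Derive (Derive f) x) <= c.

Lemma bounded_C2_ext f g a b c : (forall t, f t = g t) -> bounded_C2 f a b c -> bounded_C2 g a b c.
Proof.
  intros H [H1 H2].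
  assert (Hd : forall x, Derive f x = Derive g x) by (intros; apply Derive_ext; auto).
  split. eapply C2_ext; eauto. intros x. rewrite <- H, <- Hd, <- (Derive2_ext f g) by auto.
  apply H2.
Qed.

Lemma bounded_C2_mono f a b c a' b' c' : bounded_C2 f a b c -> a <= a' -> b <= b' -> c <= c' ->
  bounded_C2 f a' b' c'.
Proof.
  intros [H1 H2] ? ? ?. split; auto.
  intros x; destruct (H2 x) as (?&?&?); repeat split; lra.
Qed.

Lemma bounded_C2_nonneg f a b c : bounded_C2 f a b c -> 0 <= a /\ 0 <= b /\ 0 <= c.
Proof.
  intros [_ H]. destruct (H 0) as (?&?&?).
  pose proof (Rabs_pos (f 0)). pose proof (Rabs_pos (Derive f 0)).
  pose proof (Rabs_pos (Derive (Derive f) 0)). lra.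
Qed.

Lemma bounded_C2_const k : bounded_C2 (fun _ => k) (Rabs k) 0 0.
Proof.
  split. apply C2_const. intros x.
  rewrite Derive2_const, Derive_const, Rabs_R0. repeat split; lra.
Qed.

Lemma bounded_C2_plus f g a b c a' b' c' : bounded_C2 f a b c -> bounded_C2 g a' b' c' ->
  bounded_C2 (fun t => f t + g t) (a + a') (b + b') (c + c').
Proof.
  intros [[F1 F2] Fb] [[G1 G2] Gb]. split. apply C2_plus; split; auto.
  intros x. destruct (Fb x) as (?&?&?), (Gb x) as (?&?&?).
  rewrite (Derive_ext (Derive (fun t => f t + g t)) (fun t => Derive f t + Derive g t))
    by (intros; apply (Derive_plus f g); auto).
  rewrite (Derive_plus f g), (Derive_plus (Derive f) (Derive g)); auto.
  repeat split; (eapply Rle_trans; [apply Rabs_triang|]); lra.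
Qed.

Lemma bounded_C2_mult f g a b c a' b' c' : bounded_C2 f a b c -> bounded_C2 g a' b' c' ->
  bounded_C2 (fun t => f t * g t) (a * a') (b * a' + a * b') (c * a' + 2 * (b * b') + a * c').
Proof.
  intros Hf Hg.
  destruct (bounded_C2_nonneg _ _ _ _ Hf) as (?&?&?), (bounded_C2_nonneg _ _ _ _ Hg) as (?&?&?).
  destruct Hf as [Fc Fb], Hg as [Gc Gb]. pose proof Fc as [F1 F2]; pose proof Gc as [G1 G2].
  split. apply C2_mult; auto.
  intros x. destruct (Fb x) as (?&?&?), (Gb x) as (?&?&?).
  rewrite Derive2_mult by auto. rewrite Derive_mult by auto.
  repeat split.
  - rewrite Rabs_mult. apply Rmult_le_compat; auto using Rabs_pos.
  - eapply Rle_trans; [apply Rabs_triang|]. rewrite !Rabs_mult.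
    apply Rplus_le_compat; apply Rmult_le_compat; auto using Rabs_pos.
  - eapply Rle_trans; [apply Rabs_triang|].
    eapply Rle_trans; [apply Rplus_le_compat_r; apply Rabs_triang|].
    rewrite !Rabs_mult, (Rabs_right 2) by lra.
    repeat apply Rplus_le_compat; try apply Rmult_le_compat_l; try lra;
      apply Rmult_le_compat; auto using Rabs_pos.
Qed.

Lemma bounded_C2_rsum n (f : nat -> R -> R) a b c :
  (forall k, (k < n)%nat -> bounded_C2 (f k) (a k) (b k) (c k)) ->
  bounded_C2 (fun t => rsum n (fun k => f k t)) (rsum n a) (rsum n b) (rsum n c).
Proof.
  induction n; intros H; simpl.
  - eapply bounded_C2_mono. apply bounded_C2_const. rewrite Rabs_R0; lra. lra. lra.
  - apply bounded_C2_plus; auto.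
Qed.

(* Entrywise bounds on [Q'] and [Q''] along a retraction curve, obtained from
   [qr_deriv_estimate] applied to the first- and second-order identities
   ([curve_k1] bounds [R' R^-1]). *)
Definition curve_c1 m p := qr_deriv_bound m p (INR p) 0.
Definition curve_k1 m p := upper_factor_bound m (INR p) 0.
Definition curve_c2 m p :=
  qr_deriv_bound m p (2 * (INR p * (curve_c1 m p * curve_k1 m p)))
                     (2 * (INR m * (curve_c1 m p * curve_c1 m p))).

Section RetractionCurve.
Variables (m p : nat) (U X : Mat).
Hypothesis HU : Stiefel m p U.
Hypothesis HX : tangentSt m p U X.

Let Bt t := madd U (mscale t X).
Let Qt t := qf m p (Bt t).
Let Rt t := mmul m (transpose (Qt t)) (Bt t).

Lemma curve_qr t : is_qr m p (Bt t) (Qt t) (Rt t).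
Proof.
  destruct (qf_spec m p (Bt t)) as (Rr & H).
  { apply retraction_curve_nonshrinking; auto. }
  pose proof H as (HS & Hup & Hd & HB). fold (Qt t) in *.
  assert (HR : forall k j, (k < p)%nat -> (j < p)%nat -> Rr k j = Rt t k j)
    by (intros; apply (is_qr_R m p _ _ _ H); auto).
  repeat split; auto.
  - intros i j Hji Hi. rewrite <- HR by lia. auto.
  - intros i Hi. rewrite <- HR; auto.
  - intros i j Hi Hj. rewrite HB by auto. apply rsum_ext; intros. rewrite HR; auto.
Qed.

Lemma curve_C2 i j : C2 (fun t => Bt t i j).
Proof.
  eapply C2_ext; [|apply (C2_affine (U i j) (X i j))]. intros; unfold Bt, madd, mscale; ring.
Qed.

(* The Q-factor depends smoothly on [t]: column [j] is the normalized
   residual of [B_j] against the previous columns, which are smooth by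
   induction. *)
Lemma curve_Q_C2 j : (j < p)%nat -> forall i, (i < m)%nat -> C2 (fun t => Qt t i j).
Proof.
  induction j as [j IH] using lt_wf_ind. intros Hj i Hi.
  set (w := fun t l => gs_resid m (Bt t) (Qt t) j l).
  assert (Hw : forall l, (l < m)%nat -> C2 (fun t => w t l)).
  { intros l Hl. unfold w, gs_resid. apply C2_minus. apply curve_C2.
    apply (C2_rsum j (fun k t => mmul m (transpose (Qt t)) (Bt t) k j * Qt t l k)). intros k Hk.
    apply C2_mult. apply C2_mmul; intros; [apply IH|apply curve_C2]; lia. apply IH; lia. }
  assert (Hs : C2 (fun t => rsum m (fun l => w t l ^ 2))).
  { apply (C2_rsum m (fun l t => w t l ^ 2)). intros l Hl.
    eapply C2_ext; [|apply (C2_mult _ _ (Hw l Hl) (Hw l Hl))]. intros; simpl; ring. }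
  eapply C2_ext.
  - intros t. symmetry. apply (proj2 (qr_column m p _ _ _ (curve_qr t) j Hj)); auto.
  - apply C2_mult. apply Hw; auto. apply C2_inv_sqrt; auto.
    intros t. apply (proj1 (qr_column m p _ _ _ (curve_qr t) j Hj)).
Qed.

Lemma curve_R_C2 k j : (k < p)%nat -> C2 (fun t => Rt t k j).
Proof.
  intros Hk. apply C2_mmul; intros l Hl. apply curve_Q_C2; auto. apply curve_C2.
Qed.

Lemma curve_Q_C1 i j : (i < m)%nat -> (j < p)%nat -> C1 (fun t => Qt t i j).
Proof. intros Hi Hj. exact (proj1 (curve_Q_C2 j Hj i Hi)). Qed.

Lemma curve_R_C1 k j : (k < p)%nat -> C1 (fun t => Rt t k j).
Proof. intros Hk. exact (proj1 (curve_R_C2 k j Hk)). Qed.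

Lemma curve_R_inverse t : exists C : Mat,
  (forall a j, (j < a)%nat -> C a j = 0) /\
  (forall a j, (a < p)%nat -> (j < p)%nat -> Rabs (C a j) <= 1) /\
  (forall i j, (i < p)%nat -> (j < p)%nat -> mmul p (Rt t) C i j = delta i j).
Proof.
  destruct (qf_inverse_factor m p (Bt t)) as (C & HQ & HC & Hb).
  { apply retraction_curve_nonshrinking; auto. }
  exists C. split; [|split]; auto. intros i j Hi Hj.
  unfold Rt. rewrite mmul_assoc.
  destruct (curve_qr t) as (HS & _).
  transitivity (mmul m (transpose (Qt t)) (Qt t) i j); [|apply HS; auto].
  apply rsum_ext; intros l Hl. unfold Qt. rewrite HQ; auto.
Qed.

Lemma curve_Derive_B i j x : Derive (fun t => Bt t i j) x = X i j.
Proof. apply is_derive_unique. unfold Bt, madd, mscale. auto_derive; auto. ring. Qed.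

Lemma curve_Derive2_B i j x : Derive (Derive (fun t => Bt t i j)) x = 0.
Proof.
  rewrite (Derive_ext (Derive (fun t => Bt t i j)) (fun _ => X i j)).
  apply Derive_const. intros t. apply curve_Derive_B.
Qed.

Lemma curve_first_order x :
  (forall i j, (i < m)%nat -> (j < p)%nat ->
     mmul p (dmat Qt x) (Rt x) i j + mmul p (Qt x) (dmat Rt x) i j = X i j) /\
  (forall a b, (a < p)%nat -> (b < p)%nat ->
     mmul m (transpose (Qt x)) (dmat Qt x) a b + mmul m (transpose (dmat Qt x)) (Qt x) a b = 0) /\
  (forall k j, (j < k)%nat -> (k < p)%nat -> dmat Rt x k j = 0).
Proof.
  split; [|split].
  - intros i j Hi Hj. rewrite <- (curve_Derive_B i j x), <- (Derive_mmul p Qt Rt).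
    + apply Derive_ext; intros t. destruct (curve_qr t) as (_ & _ & _ & HB). rewrite HB; auto.
    + intros; apply curve_Q_C1; auto.
    + intros; apply curve_R_C1; auto.
  - intros a b Ha Hb. rewrite Rplus_comm.
    change (transpose (dmat Qt x)) with (dmat (fun t => transpose (Qt t)) x).
    rewrite <- (Derive_mmul m (fun t => transpose (Qt t)) Qt), <- (Derive_const (delta a b) x).
    + apply Derive_ext; intros t. destruct (curve_qr t) as (HS & _). apply HS; auto.
    + intros; apply curve_Q_C1; auto.
    + intros; apply curve_Q_C1; auto.
  - intros k j Hjk Hk. unfold dmat. rewrite <- (Derive_const 0 x).
    apply Derive_ext; intros t. destruct (curve_qr t) as (_ & Hup & _). apply Hup; auto.
Qed.

Lemma curve_second_order x :
  (forall i j, (i < m)%nat -> (j < p)%nat ->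
     mmul p (d2mat Qt x) (Rt x) i j + mmul p (Qt x) (d2mat Rt x) i j
     = - 2 * mmul p (dmat Qt x) (dmat Rt x) i j) /\
  (forall a b, (a < p)%nat -> (b < p)%nat ->
     mmul m (transpose (Qt x)) (d2mat Qt x) a b + mmul m (transpose (d2mat Qt x)) (Qt x) a b
     = - 2 * mmul m (transpose (dmat Qt x)) (dmat Qt x) a b) /\
  (forall k j, (j < k)%nat -> (k < p)%nat -> d2mat Rt x k j = 0).
Proof.
  split; [|split].
  - intros i j Hi Hj.
    pose proof (Derive2_mmul p Qt Rt i j x) as E.
    rewrite <- (Derive2_ext (fun t => Bt t i j)), curve_Derive2_B in E.
    + enough (mmul p (d2mat Qt x) (Rt x) i j + 2 * mmul p (dmat Qt x) (dmat Rt x) i j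
              + mmul p (Qt x) (d2mat Rt x) i j = 0) by lra.
      rewrite <- E; auto. intros; apply curve_Q_C2; auto. intros; apply curve_R_C2; auto.
    + intros t. destruct (curve_qr t) as (_ & _ & _ & HB). apply HB; auto.
  - intros a b Ha Hb.
    pose proof (Derive2_mmul m (fun t => transpose (Qt t)) Qt a b x) as E.
    rewrite <- (Derive2_ext (fun _ => delta a b)), Derive2_const in E.
    + change (d2mat (fun t => transpose (Qt t)) x) with (transpose (d2mat Qt x)) in E.
      change (dmat (fun t => transpose (Qt t)) x) with (transpose (dmat Qt x)) in E.
      enough (mmul m (transpose (d2mat Qt x)) (Qt x) a b
              + 2 * mmul m (transpose (dmat Qt x)) (dmat Qt x) a b
              + mmul m (transpose (Qt x)) (d2mat Qt x) a b = 0) by lra.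
      rewrite <- E; auto. intros; apply curve_Q_C2; auto. intros; apply curve_Q_C2; auto.
    + intros t. destruct (curve_qr t) as (HS & _). symmetry. apply HS; auto.
  - intros k j Hjk Hk. unfold d2mat. rewrite <- (Derive2_const 0 x).
    apply Derive2_ext; intros t. destruct (curve_qr t) as (_ & Hup & _). apply Hup; auto.
Qed.

Lemma curve_Q_deriv_bounds x :
  (forall i j, (i < m)%nat -> (j < p)%nat -> Rabs (X i j) <= 1) ->
  forall i j, (i < m)%nat -> (j < p)%nat ->
    Rabs (dmat Qt x i j) <= curve_c1 m p /\ Rabs (d2mat Qt x i j) <= curve_c2 m p.
Proof.
  intros HXb. assert (Habs2 : Rabs (-2) = 2) by (rewrite Rabs_left; lra).
  destruct (curve_R_inverse x) as (C & HC & HCb & HRC).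
  destruct (curve_qr x) as (HS & _).
  destruct (curve_first_order x) as (H1R & H1Q & H1up).
  destruct (curve_second_order x) as (H2R & H2Q & H2up).
  destruct (qr_deriv_estimate m p (Qt x) (Rt x) C (dmat Qt x) (dmat Rt x) X
              (fun _ _ => 0) (INR p) 0) as (HK1 & HD1); auto.
  { intros i j Hi Hj. replace (INR p) with (INR p * (1 * 1)) by ring.
    apply rsum_prod_bound; auto. }
  { intros; rewrite Rabs_R0; lra. }
  assert (HD2 : forall i j, (i < m)%nat -> (j < p)%nat -> Rabs (d2mat Qt x i j) <= curve_c2 m p).
  { refine (proj2 (qr_deriv_estimate m p (Qt x) (Rt x) C (d2mat Qt x) (d2mat Rt x)
              (fun i j => - 2 * mmul p (dmat Qt x) (dmat Rt x) i j)
              (fun a b => - 2 * mmul m (transpose (dmat Qt x)) (dmat Qt x) a b)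
              _ _ _ _ _ _ _ _ _ _)); auto.
    - intros i j Hi Hj. rewrite mmul_scal_l, mmul_assoc, Rabs_mult, Habs2.
      apply Rmult_le_compat_l; [lra|]. apply rsum_prod_bound; intros; auto.
    - intros a b Ha Hb. rewrite Rabs_mult, Habs2.
      apply Rmult_le_compat_l; [lra|]. apply rsum_prod_bound; intros; apply HD1; auto. }
  intros i j Hi Hj. split; [apply HD1 | apply HD2]; auto.
Qed.

Lemma curve_Q_bounded_C2 :
  (forall i j, (i < m)%nat -> (j < p)%nat -> Rabs (X i j) <= 1) ->
  forall i j, (i < m)%nat -> (j < p)%nat ->
    bounded_C2 (fun t => Qt t i j) 1 (curve_c1 m p) (curve_c2 m p).
Proof.
  intros HXb i j Hi Hj. split. apply curve_Q_C2; auto. intros x.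
  destruct (curve_qr x) as (HS & _).
  destruct (curve_Q_deriv_bounds x HXb i j Hi Hj).
  repeat split; auto. apply (stiefel_entry_le1 m p); auto.
Qed.
End RetractionCurve.

Lemma curve_consts_nonneg m p : 0 <= curve_c1 m p /\ 0 <= curve_c2 m p.
Proof.
  pose proof (pos_INR m); pose proof (pos_INR p).
  assert (Hb : forall g s, 0 <= g -> 0 <= s ->
            0 <= upper_factor_bound m g s /\ 0 <= qr_deriv_bound m p g s).
  { intros g s Hg Hs. unfold qr_deriv_bound, upper_factor_bound.
    assert (0 <= INR m * g) by nra. split; nra. }
  destruct (Hb (INR p) 0) as (Hk1 & Hc1); try lra.
  fold (curve_k1 m p) in Hk1. fold (curve_c1 m p) in Hc1.
  split; [exact Hc1|]. refine (proj2 (Hb _ _ _ _)); repeat apply Rmult_le_pos; lra.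
Qed.

Lemma Fcost_expand m n p A mu (QU QV : Mat) :
  Fcost m n p A mu QU QV =
  rsum p (fun j => rsum n (fun k => rsum m (fun l => (mu j * A l k) * (QU l j * QV k j)))).
Proof.
  unfold Fcost, mtrace, diagm. apply rsum_ext; intros i Hi.
  unfold mmul at 1.
  rewrite (rsum_ext p _ (fun j => (mmul n (mmul m (transpose QU) A) QV i j * mu j) * delta j i))
    by (intros j _; unfold delta; destruct (Nat.eqb_spec i j), (Nat.eqb_spec j i); subst;
        try lia; ring).
  rewrite rsum_delta_r by auto. unfold mmul, transpose. rewrite <- rsum_scal_r.
  apply rsum_ext; intros k Hk. rewrite <- !rsum_scal_r. apply rsum_ext; intros; ring.
Qed.

Definition cost_curvature_bound m n p (A : Mat) (mu : nat -> R) c1U c2U c1V c2V :=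
  rsum p (fun j => rsum n (fun k => rsum m (fun l =>
    Rabs (mu j * A l k) * (c2U + 2 * (c1U * c1V) + c2V)))).

Lemma cost_bounded_C2 m n p A mu (QU QV : R -> Mat) c1U c2U c1V c2V :
  (forall l j, (l < m)%nat -> (j < p)%nat -> bounded_C2 (fun t => QU t l j) 1 c1U c2U) ->
  (forall k j, (k < n)%nat -> (j < p)%nat -> bounded_C2 (fun t => QV t k j) 1 c1V c2V) ->
  exists a b, bounded_C2 (fun t => Fcost m n p A mu (QU t) (QV t)) a b
                (cost_curvature_bound m n p A mu c1U c2U c1V c2V).
Proof.
  intros HU HV. do 2 eexists. eapply bounded_C2_mono.
  - eapply bounded_C2_ext. intros t. symmetry. apply Fcost_expand.
    apply bounded_C2_rsum; intros j Hj. apply bounded_C2_rsum; intros k Hk.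
    apply bounded_C2_rsum; intros l Hl.
    apply bounded_C2_mult. apply bounded_C2_const. apply bounded_C2_mult; auto.
  - apply Rle_refl.
  - apply Rle_refl.
  - unfold cost_curvature_bound. repeat (apply rsum_le; intros). apply Req_le. ring.
Qed.

Lemma Derive_lipschitz f c : C2 f -> (forall x, Rabs (Derive (Derive f) x) <= c) ->
  forall t, Rabs (Derive f t - Derive f 0) <= c * Rabs t.
Proof.
  intros [F1 F2] Hc t.
  destruct (MVT_gen (Derive f) 0 t (Derive (Derive f))) as (x & _ & Eq).
  - intros x _. apply Derive_correct. apply F2.
  - intros x _. apply continuity_pt_filterlim. apply (ex_derive_continuous (Derive f) x). apply F2.
  - rewrite Eq, Rabs_mult, Rminus_0_r. apply Rmult_le_compat_r. apply Rabs_pos. apply Hc.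
Qed.

Lemma gram_trace_nonneg m p (Y : Mat) : 0 <= mtrace p (mmul m (transpose Y) Y).
Proof. repeat (apply rsum_nonneg; intros). unfold transpose. nra. Qed.

Lemma entry_le_gram_trace m p (Y : Mat) i j : (i < m)%nat -> (j < p)%nat ->
  mtrace p (mmul m (transpose Y) Y) <= 1 -> Rabs (Y i j) <= 1.
Proof.
  intros Hi Hj H. apply abs_le_1_of_sq.
  eapply Rle_trans; [apply (rsum_sq_le m (fun l => Y l j) i Hi)|].
  eapply Rle_trans; [|exact H].
  eapply Rle_trans; [|apply (rsum_term_le p (fun a => mmul m (transpose Y) Y a a) j Hj)].
  - apply Req_le. apply rsum_ext; intros; unfold transpose; ring.
  - intros. apply rsum_nonneg; intros; unfold transpose; nra.
Qed.

Theorem mainTheorem7 (m n p : nat) (A : Mat) (mu : nat -> R)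
  (Hnm : (n <= m)%nat) (Hpn : (p <= n)%nat) (Hp : (1 <= p)%nat)
  (Hdec : forall i, (S i < p)%nat -> mu (S i) < mu i)
  (Hpos : forall i, (i < p)%nat -> 0 < mu i) :
  exists L, 0 < L /\
    forall (U V xi eta : Mat) (t : R),
      Stiefel m p U -> Stiefel n p V ->
      tangentSt m p U xi -> tangentSt n p V eta ->
      tnorm2 m n p xi eta = 1 -> 0 <= t ->
      exists d1 d0,
        derivable_pt_lim (pullback m n p A mu U V xi eta) t d1 /\
        derivable_pt_lim (pullback m n p A mu U V xi eta) 0 d0 /\
        Rabs (d1 - d0) <= L * t.
Proof.
  set (c := cost_curvature_bound m n p A mu (curve_c1 m p) (curve_c2 m p)
                                            (curve_c1 n p) (curve_c2 n p)).
  assert (Hc : 0 <= c).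
  { destruct (curve_consts_nonneg m p), (curve_consts_nonneg n p).
    repeat (apply rsum_nonneg; intros). apply Rmult_le_pos. apply Rabs_pos. nra. }
  exists (c + 1). split; [lra|].
  intros U V xi eta t HU HV Hxi Heta Hnorm Ht.
  unfold tnorm2 in Hnorm.
  pose proof (gram_trace_nonneg m p xi). pose proof (gram_trace_nonneg n p eta).
  destruct (cost_bounded_C2 m n p A mu (fun t => qf m p (madd U (mscale t xi)))
              (fun t => qf n p (madd V (mscale t eta))) (curve_c1 m p) (curve_c2 m p)
              (curve_c1 n p) (curve_c2 n p)) as (a & b & HC2 & Hb).
  { intros l j Hl Hj. apply (curve_Q_bounded_C2 m p U xi); auto.
    intros; apply (entry_le_gram_trace m p); auto; lra. }
  { intros k j Hk Hj. apply (curve_Q_bounded_C2 n p V eta); auto.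
    intros; apply (entry_le_gram_trace n p); auto; lra. }
  fold c in Hb.
  set (phi := pullback m n p A mu U V xi eta).
  exists (Derive phi t), (Derive phi 0). split; [|split].
  - apply is_derive_Reals, Derive_correct, HC2.
  - apply is_derive_Reals, Derive_correct, HC2.
  - eapply Rle_trans. apply (Derive_lipschitz phi c HC2). intros x; apply Hb.
    rewrite Rabs_right by lra. apply Rmult_le_compat_r; lra.
Qed.
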